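(* Let $\iota:\langle X_0,d_0\rangle\to\langle X_1,d_1\rangle$ be a dense isometry between metric spaces and let $f:\langle X_1,d_1\rangle\to\langle X_2,d_2\rangle$ be a function between metric spaces. Then $f$ is Cauchy-continuous if and only if $f$ is continuous and $f\circ\iota$ is Cauchy-continuous.
   Context: A dense isometry is a distance-preserving map (not necessarily onto) whose image is dense. A function between metric spaces is Cauchy-continuous if it maps Cauchy sequences to Cauchy sequences. *)

From HB Require Import structures.
From mathcomp Require Import all_boot all_order all_algebra.
From mathcomp Require Import all_classical all_reals all_analysis.
Set Implicit Arguments. Unset Strict Implicit. Unset Printing Implicit Defensive.
Import Order.TTheory GRing.Theory Num.Theory.
Local Open Scope classical_set_scope.
Local Open Scope ring_scope.

Definition isometry {R : realType} {X Y : metricType R} (i : X -> Y) : Prop :=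
  forall x y : X, mdist (i x) (i y) = mdist x y.

Definition dense_isometry {R : realType} {X Y : metricType R} (i : X -> Y) : Prop :=
  isometry i /\ dense (range i).

Definition cauchy_continuous {R : realType} {X Y : metricType R} (f : X -> Y) : Prop :=
  forall u : nat -> X, cauchy (u @ \oo) -> cauchy ((f \o u) @ \oo).

From Pilot Require Import Defs.
From HB Require Import structures.
From mathcomp Require Import all_boot all_order all_algebra.
From mathcomp Require Import all_classical all_reals all_analysis.
From mathcomp Require Import lra zify.
Set Implicit Arguments. Unset Strict Implicit. Unset Printing Implicit Defensive.
Import Order.TTheory GRing.Theory Num.Theory.
Import metricType_numDomainType.
Local Open Scope classical_set_scope.
Local Open Scope ring_scope.

(* A Cauchy-continuous f is continuous: interleaving a sequence u -> x
   with the constant sequence x yields a Cauchy sequence, and Cauchyness of its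
   image forces f (u n) -> f x. Conversely, for a Cauchy sequence u in X1,
   continuity of f and density of the image of iota give v n in X0 with
   iota (v n) and f (iota (v n)) within 1/(n+1) of u n and f (u n); so
   iota \o v is Cauchy, hence v (iota is an isometry), hence f \o iota \o v,
   hence f \o u. *)

Lemma dense_nbhs_meet (T : topologicalType) (S A : set T) (x : T) :
  dense S -> nbhs x A -> A `&` S !=set0.
Proof.
move=> dS xA; have [y [Ay Sy]] := dS A° (ex_intro _ x xA) (@open_interior _ A).
by exists y; split => //; exact: interior_subset.
Qed.

Section cauchy_continuity.
Variable R : realType.

Lemma cauchy_seq_mdistP {X : metricType R} (u : nat -> X) :
  cauchy (u @ \oo) <->
  forall e, 0 < e -> \forall m & n \near \oo, mdist (u m) (u n) < e.
Proof.
rewrite -cauchy_ballP; split=> + e e0 => /(_ e e0).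
  move=> [[A B] /= [uA uB] AB].
  exists ([set m | A (u m)], [set n | B (u n)]) => // -[m n] [/= Am Bn].
  by have := AB (u m, u n) (conj Am Bn); rewrite /= ballEmdist.
move=> [[A B] /= [NA NB] AB]; exists (u @` A, u @` B).
  by split; [apply: filterS NA | apply: filterS NB] => m; exists m.
by move=> [_ _] [[m Am <-] [n Bn <-]]; rewrite /= ballEmdist; apply: (AB (m, n)).
Qed.

Lemma cauchy_seq_close {X : metricType R} (u w : nat -> X) :
  cauchy (u @ \oo) ->
  (forall e, 0 < e -> \forall n \near \oo, mdist (u n) (w n) < e) ->
  cauchy (w @ \oo).
Proof.
move=> /cauchy_seq_mdistP uc uw; apply/cauchy_seq_mdistP => e e0.
have e3_gt0 : 0 < e / 3 by rewrite divr_gt0.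
have uw_pair : \forall m & n \near \oo,
    mdist (w m) (u m) < e / 3 /\ mdist (u n) (w n) < e / 3.
  by near=> m n => /=; rewrite metric_sym; split; [near: m | near: n]; apply: uw.
apply: filterS2 (uc _ e3_gt0) uw_pair => -[m n] /= umn [wum unw].
rewrite (le_lt_trans (metric_triangle _ (u n) _)) //.
rewrite (le_lt_trans (lerD (metric_triangle _ (u m) _) (lexx _))) //.
have -> : e = e / 3 + e / 3 + e / 3 by lra.
by rewrite !ltrD.
Unshelve. all: by end_near. Qed.

Lemma cvg_seq_cauchy {X : metricType R} (u : nat -> X) (x : X) :
  u @ \oo --> x -> cauchy (u @ \oo).
Proof.
move=> /cvgrPdist_lt ux; apply: (@cauchy_seq_close _ (fun=> x)) ux.
by apply/cauchy_seq_mdistP => e e0; near=> m n; rewrite mdistxx.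
Unshelve. all: by end_near. Qed.

Lemma isometry_cauchy {X Y : metricType R} (i : X -> Y) (u : nat -> X) :
  Defs.isometry i -> cauchy ((i \o u) @ \oo) <-> cauchy (u @ \oo).
Proof.
move=> iso; rewrite !cauchy_seq_mdistP.
by split=> + e e0 => /(_ e e0); apply: filterS => -[m n] /=; rewrite iso.
Qed.

Lemma seq_cvg_continuous {X Y : metricType R} (f : X -> Y) (x : X) :
  (forall u : nat -> X, u @ \oo --> x -> (f \o u) @ \oo --> f x) ->
  {for x, continuous f}.
Proof.
move=> seqf; apply/cvgrPdist_lt => e e0; apply: contrapT => fxNe.
have /choice[u xu] : forall n : nat,
    exists y, mdist x y < n.+1%:R^-1 /\ ~ mdist (f x) (f y) < e.
  move=> n; apply: contrapT => /forallNP nearN; apply: fxNe.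
  apply/nbhs_mdistP; exists n.+1%:R^-1 => [|y /= xy]; first by rewrite /= invr_gt0.
  by have /not_andP[//|/contrapT] := nearN y.
have ux : u @ \oo --> x.
  apply/cvgrPdist_lt => d d0; near=> n; apply: lt_trans (xu n).1 _.
  by near: n; exact: (near_infty_natSinv_lt (PosNum d0)).
have /cvgrPdist_lt/(_ e e0) [N _ fuN] := seqf u ux.
exact: (xu N).2 (fuN N (leqnn N)).
Unshelve. all: by end_near. Qed.

Lemma dense_approx_continuous {X Y : metricType R} (D : set X) (f : X -> Y)
    (x : X) (e : R) :
  dense D -> {for x, continuous f} -> 0 < e ->
  exists2 y, D y & mdist x y < e /\ mdist (f x) (f y) < e.
Proof.
move=> dD fx e0.
have near_x : \forall y \near x, mdist x y < e /\ mdist (f x) (f y) < e.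
  near=> y; split; near: y; last exact: (cvgr_dist_lt fx e0).
  by have := nbhsx_ballx x e e0; rewrite ballEmdist.
by have [y [xy Dy]] := dense_nbhs_meet dD near_x; exists y.
Unshelve. all: by end_near. Qed.

Lemma cauchy_continuous_cvg {X Y : metricType R} (f : X -> Y) (u : nat -> X)
    (x : X) :
  cauchy_continuous f -> u @ \oo --> x -> (f \o u) @ \oo --> f x.
Proof.
move=> fcc ux.
pose w n := if odd n then u n./2 else x.
have wx : w @ \oo --> x.
  apply/cvgrPdist_lt => e e0; have [N _ uN] := cvgr_dist_lt ux e0.
  exists N.*2 => // n /= Nn; rewrite /w; case: odd; last by rewrite mdistxx.
  by apply: uN; rewrite /= -(doubleK N) half_leq.
have /cauchy_seq_mdistP fwc := fcc w (cvg_seq_cauchy wx).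
apply/cvgrPdist_lt => e e0.
have [[A B] /= [[M _ MA] [N _ NB]] AB] := fwc e e0.
exists (maxn M N) => // n /= MNn.
have := AB (n.*2, n.*2.+1); rewrite /w /= odd_double /= uphalf_double; apply.
by split; [apply: MA | apply: NB]; rewrite /=; lia.
Qed.

Lemma cauchy_continuous_continuous {X Y : metricType R} (f : X -> Y) :
  cauchy_continuous f -> continuous f.
Proof.
by move=> fcc x; apply: seq_cvg_continuous => u; exact: cauchy_continuous_cvg.
Qed.

End cauchy_continuity.

Theorem lemma4p1 (R : realType) (X0 X1 X2 : metricType R)
  (iota : X0 -> X1) (f : X1 -> X2) :
  dense_isometry iota ->
  (cauchy_continuous f <-> (continuous f /\ cauchy_continuous (f \o iota))).
Proof.
move=> [iso dense_iota]; split=> [fcc | [fc fic] u uc].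
  split; first exact: cauchy_continuous_continuous.
  by move=> v vc; apply: fcc; apply/(isometry_cauchy _ iso).
have /choice[v uv] : forall n : nat, exists v : X0,
    mdist (u n) (iota v) < n.+1%:R^-1 /\
    mdist (f (u n)) (f (iota v)) < n.+1%:R^-1.
  move=> n; have n_gt0 : 0 < n.+1%:R^-1 :> R by rewrite invr_gt0.
  have [_ [v _ <-]] := dense_approx_continuous dense_iota (fc (u n)) n_gt0.
  by exists v.
have inv_small (e : R) : 0 < e -> \forall n \near \oo, n.+1%:R^-1 < e.
  by move=> e0; exact: (near_infty_natSinv_lt (PosNum e0)).
have vc : cauchy (v @ \oo).
  apply/(isometry_cauchy _ iso)/(cauchy_seq_close uc) => e /inv_small.
  by apply: filterS => n; exact: lt_trans (uv n).1.
apply: (cauchy_seq_close (fic v vc)) => e /inv_small.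
by apply: filterS => n; rewrite metric_sym; exact: lt_trans (uv n).2.
Qed.
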